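(* Let $A\in\{0,1\}^{n\times n}$, let $\mathcal{F}$ be the set of all compatible pairs $(n_1,n_2)$ for which $A$ admits an $(n_1,n_2)$ factorization, and let $\mathcal{L}=\{n_1:(n_1,n_2)\in\mathcal{F}\}$. Let $\mathfrak{l}_0<\mathfrak{l}_1<\dots<\mathfrak{l}_q$ be a branch of $\mathcal{L}$, and set $p_k=\mathfrak{l}_k/\mathfrak{l}_{k-1}$ for $k=1,\dots,q$ and $r=n/\mathfrak{l}_q$. Then $A$ admits an $(\mathfrak{l}_0,p_1,\dots,p_q,r)$ factorization, and this factorization is prime, i.e. every factor matrix in it is prime.
   Context: Kronecker products of binary matrices use Boolean arithmetic ($1+1=1$). An $(n_1,\dots,n_m)$ factorization of $A$ is $A=A_1\otimes\cdots\otimes A_m$ with $A_i\in\{0,1\}^{n_i\times n_i}$, $\prod n_i=n$. A compatible pair for $n$ is $(n_1,n_2)$ with $n_1,n_2$ positive divisors of $n$ different from $1$ and $n$ and $n_1n_2=n$. A matrix $X\in\{0,1\}^{m\times m}$ is decomposable if $X=X_1\otimes\cdots\otimes X_\ell$ for some $\ell>1$ and $X_i\in\{0,1\}^{m_i\times m_i}$ with $m_i>1$; it is prime if it is not decomposable. For a finite set $\mathcal{X}\subset\mathbb{N}$, $\overline{\mathcal{X}}$ denotes the set of elements of $\mathcal{X}$ that are not multiples of another element of $\mathcal{X}$. A branch of $\mathcal{L}$ is a sequence $\mathfrak{l}_0,\mathfrak{l}_1,\dots,\mathfrak{l}_q$ ($q\ge0$) constructed as follows: $\mathfrak{l}_0\in\overline{\mathcal{L}}$;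 for $k\ge1$, letting $\mathcal{M}_k$ be the set of elements of $\mathcal{L}$ that are multiples of $\mathfrak{l}_{k-1}$ other than $\mathfrak{l}_{k-1}$ itself, $\mathfrak{l}_k\in\overline{\mathcal{M}_k}$; the sequence stops at $\mathfrak{l}_q$ when $\mathcal{L}$ contains no multiple of $\mathfrak{l}_q$ other than $\mathfrak{l}_q$. *)

From Stdlib Require List.
From mathcomp Require Import all_boot.
Set Implicit Arguments. Unset Strict Implicit. Unset Printing Implicit Defensive.

(* A binary matrix is represented by its entry function (0-based indices);
   its size m is carried separately: only entries (i,j) with i,j < m matter. *)
Definition bmat := nat -> nat -> bool.

Definition eqm (m : nat) (X Y : bmat) : Prop :=
  forall i j, i < m -> j < m -> X i j = Y i j.

(* Sized matrix: (size, entries). Boolean Kronecker product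
   (X (x) Y)[i1*b+i2, j1*b+j2] = X[i1,j1] && Y[i2,j2]   (1+1=1, 1*1=1). *)
Definition kron (X Y : nat * bmat) : nat * bmat :=
  (X.1 * Y.1,
   fun i j => X.2 (i %/ Y.1) (j %/ Y.1) && Y.2 (i %% Y.1) (j %% Y.1)).

Definition kronl (fs : seq (nat * bmat)) : nat * bmat :=
  foldr kron (1, fun _ _ => true) fs.

Definition factorization (A : bmat) (n : nat) (ns : seq nat)
    (fs : seq (nat * bmat)) : Prop :=
  map fst fs = ns /\ \prod_(k <- ns) k = n /\ eqm n A (kronl fs).2.

Definition admits (A : bmat) (n : nat) (ns : seq nat) : Prop :=
  exists fs, factorization A n ns fs.

Definition decomposable (m : nat) (X : bmat) : Prop :=
  exists fs : seq (nat * bmat),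
    1 < size fs /\ (forall f, List.In f fs -> 1 < f.1) /\
    factorization X m (map fst fs) fs.

Definition prime_mat (m : nat) (X : bmat) : Prop := ~ decomposable m X.

Definition compatible (n n1 n2 : nat) : Prop :=
  [/\ 0 < n1, 0 < n2, n1 %| n, n2 %| n &
      [/\ n1 != 1, n1 != n, n2 != 1, n2 != n & n1 * n2 = n]].

Definition Lset (A : bmat) (n : nat) : nat -> Prop :=
  fun n1 => exists n2, compatible n n1 n2 /\ admits A n [:: n1; n2].

Definition in_bar (X : nat -> Prop) (x : nat) : Prop :=
  X x /\ forall y, X y -> y <> x -> ~ (y %| x).

Fixpoint branch_from (L : nat -> Prop) (prev : nat) (s : seq nat) : Prop :=
  match s with
  | [::] => forall y, L y -> prev %| y -> y = prev
  | x :: s' =>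
      in_bar (fun y => L y /\ prev %| y /\ y <> prev) x /\ branch_from L x s'
  end.

Definition is_branch (L : nat -> Prop) (s : seq nat) : Prop :=
  match s with
  | [::] => False
  | x :: s' => in_bar L x /\ branch_from L x s'
  end.

(* The sizes (l_0, p_1, ..., p_q, r), p_k = l_k / l_(k-1), r = n / l_q. *)
Definition branch_sizes (n : nat) (s : seq nat) : seq nat :=
  head 0 s :: rcons [seq x.2 %/ x.1 | x <- zip s (behead s)] (n %/ last 0 s).

From Stdlib Require List.
From mathcomp Require Import all_boot zify.
Set Implicit Arguments. Unset Strict Implicit.

(* Existence: walk along the branch.  If A = F (x) R with F of size l_(k-1) and
   also A = B (x) C with B of size l_k, then the block of A at a nonzero entry
   (I, J) of F is R, and it is also (block (I, J) of B) (x) C; so R itself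
   splits off C (and if F = 0, then A = 0 splits arbitrarily).  Refining one
   step at a time yields the (l_0, p_1, ..., p_q, r) factorization.
   Primality: if some factor splits as g (x) h with g, h of size > 1, then
   regrouping the factorization as (... (x) g) (x) (h (x) ...) puts an element
   of L strictly between two consecutive terms of 1 | l_0 | ... | l_q | n in the
   divisibility order, which the minimality in the definition of a branch
   forbids. *)

Definition smeq (X Y : nat * bmat) : Prop := X.1 = Y.1 /\ eqm X.1 X.2 Y.2.

Lemma smeq_refl X : smeq X X.
Proof. by []. Qed.

Lemma smeq_sym X Y : smeq X Y -> smeq Y X.
Proof. by case=> eXY HXY; split=> // i j; rewrite -eXY => hi hj; rewrite HXY. Qed.

Lemma smeq_trans X Y Z : smeq X Y -> smeq Y Z -> smeq X Z.
Proof.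
case=> eXY HXY [eYZ HYZ]; split; first by rewrite eXY.
by move=> i j hi hj; rewrite HXY // HYZ -?eXY.
Qed.

Definition mat1 : nat * bmat := (1, fun _ _ => true).

Lemma kronl_size fs : (kronl fs).1 = \prod_(k <- map fst fs) k.
Proof. by elim: fs => [|f fs IH]; rewrite ?big_nil // big_cons -IH. Qed.

Lemma ltn_mul_add I p u b : I < p -> u < b -> I * b + u < p * b.
Proof. by move=> hI hu; nia. Qed.

Lemma kron_blockE X Y I J u v : u < Y.1 -> v < Y.1 ->
  (kron X Y).2 (I * Y.1 + u) (J * Y.1 + v) = X.2 I J && Y.2 u v.
Proof.
move=> hu hv; have Y_gt0 : 0 < Y.1 by apply: leq_ltn_trans hu.
by rewrite /kron /= !divnMDl // !divn_small // !addn0 !modnMDl !modn_small.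
Qed.

Lemma smeq_kron X X' Y Y' : smeq X X' -> smeq Y Y' -> smeq (kron X Y) (kron X' Y').
Proof.
case=> eX HX [eY HY]; split; first by rewrite /= eX eY.
move=> i j /= hi hj; have Y_gt0 : 0 < Y.1 by case: (Y.1) hi; rewrite ?muln0.
by rewrite -eY HX ?ltn_divLR // HY ?ltn_pmod.
Qed.

Lemma kron_assoc X Y Z : smeq (kron (kron X Y) Z) (kron X (kron Y Z)).
Proof.
split; first by rewrite /= mulnA.
move=> i j /= hi hj.
have Z_gt0 : 0 < Z.1 by case: (Z.1) hi; rewrite ?muln0.
have Y_gt0 : 0 < Y.1 by case: (Y.1) hi; rewrite ?muln0 ?mul0n.
rewrite -!andbA (mulnC Y.1) !divnMA !modn_divl (mulnC Z.1).
by rewrite !modn_dvdm // dvdn_mull.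
Qed.

Lemma kron1m X : smeq (kron mat1 X) X.
Proof.
split; first exact: mul1n.
by move=> i j /= hi hj; rewrite mul1n in hi hj; rewrite !modn_small // !divn_small.
Qed.

Lemma kronm1 X : smeq (kron X mat1) X.
Proof. by split=> [|i j _ _]; rewrite /= ?muln1 // !divn1 andbT. Qed.

Lemma kronl_cat pre post :
  smeq (kronl (pre ++ post)) (kron (kronl pre) (kronl post)).
Proof.
elim: pre => [|f pre IH] /=; first exact/smeq_sym/kron1m.
apply: smeq_trans (smeq_sym (kron_assoc _ _ _)).
exact: smeq_kron IH.
Qed.

Lemma kronl_refine pre f gs post : smeq f (kronl gs) ->
  smeq (kronl (pre ++ f :: post)) (kronl (pre ++ gs ++ post)).
Proof.
move=> Hf; apply: smeq_trans (kronl_cat _ _) _.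
apply: smeq_trans (smeq_sym (kronl_cat _ _)); apply: smeq_kron => //.
exact/smeq_trans/smeq_sym/kronl_cat/smeq_kron.
Qed.

Lemma kron_refine M p d m F R B C :
  smeq M (kron (p, F) (d * m, R)) -> smeq M (kron (p * d, B) (m, C)) ->
  exists Y, smeq M (kron (p, F) (kron (d, Y) (m, C))).
Proof.
move=> [eM HR] [_ HB]; rewrite /= in eM.
have dm_pos i : i < M.1 -> 0 < d * m by rewrite eM; case: (d * m); rewrite ?muln0.
have [/existsP[I /existsP[J FIJ]] | F0] :=
  boolP [exists I : 'I_p, exists J : 'I_p, F I J]; last first.
  exists B; split=> [|i j hi hj]; first by rewrite eM /= mulnA.
  have dm_gt0 := dm_pos i hi; rewrite HR //=; rewrite eM in hi hj.
  have hi' : i %/ (d * m) < p by rewrite ltn_divLR.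
  have hj' : j %/ (d * m) < p by rewrite ltn_divLR.
  move: F0; rewrite negb_exists => /forallP /(_ (Ordinal hi')).
  by rewrite negb_exists => /forallP /(_ (Ordinal hj')) /negbTE /= ->.
exists (fun a b => B (I * d + a) (J * d + b)); split=> [//|i j hi hj].
have dm_gt0 := dm_pos i hi.
have m_gt0 : 0 < m by move: dm_gt0; rewrite muln_gt0 => /andP[].
have inM (K : 'I_p) w : w < d * m -> K * (d * m) + w < M.1.
  by move=> hw; rewrite eM ltn_mul_add.
have splitE K w : K * (d * m) + w = (K * d + w %/ m) * m + w %% m.
  by rewrite mulnDl -addnA -divn_eq mulnA.
have blockR u v : u < d * m -> v < d * m ->
    R u v = B (I * d + u %/ m) (J * d + v %/ m) && C (u %% m) (v %% m).
  move=> hu hv; have := HR _ _ (inM I u hu) (inM J v hv).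
  rewrite kron_blockE //= FIJ /= => <-.
  by rewrite HB ?inM // !splitE kron_blockE ?ltn_pmod.
by rewrite HR //= blockR ?ltn_pmod.
Qed.

Lemma factorizationP A n ns fs :
  factorization A n ns fs <-> map fst fs = ns /\ smeq (n, A) (kronl fs).
Proof.
rewrite /factorization /smeq /= kronl_size.
by split=> [[<- [-> HA]] | [<- [<- HA]]].
Qed.

Lemma admits2P A n a b :
  admits A n [:: a; b] <-> exists B C, smeq (n, A) (kron (a, B) (b, C)).
Proof.
split=> [[fs /factorizationP [sizes HA]] | [B [C HA]]].
  case: fs sizes HA => [|[a' B] [|[b' C] []]] // [-> ->] HA; exists B, C.
  exact: smeq_trans HA (smeq_kron (smeq_refl _) (kronm1 _)).
exists [:: (a, B); (b, C)]; apply/factorizationP; split => //.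
exact: smeq_trans HA (smeq_kron (smeq_refl _) (smeq_sym (kronm1 _))).
Qed.

Lemma admits_cat A n pre post : smeq (n, A) (kronl (pre ++ post)) ->
  admits A n [:: (kronl pre).1; (kronl post).1].
Proof.
move=> HA; apply/admits2P; exists (kronl pre).2, (kronl post).2.
exact: smeq_trans HA (kronl_cat _ _).
Qed.

Lemma compatible_mul a b : 1 < a -> 1 < b -> compatible (a * b) a b.
Proof.
move=> a_gt1 b_gt1; split; [exact: ltnW | exact: ltnW | exact: dvdn_mulr |
  exact: dvdn_mull | split=> //; apply/eqP; nia].
Qed.

Definition step_sizes (n prev : nat) (s : seq nat) : seq nat :=
  rcons [seq x.2 %/ x.1 | x <- zip (prev :: s) s] (n %/ last prev s).

Lemma branch_sizesE n l s : branch_sizes n (l :: s) = step_sizes n 1 (l :: s).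
Proof. by rewrite /step_sizes /= divn1. Qed.

Lemma branch_from_one L s :
  (forall y, L y -> 1 < y) -> is_branch L s -> branch_from L 1 s.
Proof.
move=> L_gt1; case: s => [|l s] // [[Ll l_min] branch]; split=> //; split.
  by split=> //; split=> //; apply/eqP; rewrite gtn_eqF ?L_gt1.
by move=> y [Ly _]; apply: l_min.
Qed.

Definition divisibility_gap (L : nat -> Prop) (a b : nat) : Prop :=
  forall y, L y -> a %| y -> y %| b -> y = a \/ y = b.

Lemma branch_from_gap L n prev s pre x post :
  branch_from L prev s -> step_sizes n prev s = pre ++ x :: post ->
  divisibility_gap L (prev * \prod_(k <- pre) k) (prev * \prod_(k <- pre) k * x).
Proof.
elim: s prev pre => [|l s IH] prev pre; rewrite /step_sizes /=.
  move=> last_prev; case: pre => [|? []] // _.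
  by rewrite big_nil muln1 => y Ly prev_y _; left; apply: last_prev.
move=> [[[_ [prev_l _]] l_min] branch].
have prev_lE : prev * (l %/ prev) = l by rewrite mulnC divnK.
case: pre => [|k pre] [<-].
  rewrite big_nil muln1 prev_lE => _ y Ly prev_y y_l.
  have [-> | y_neq] := eqVneq y prev; first by left.
  have [-> | y_neq'] := eqVneq y l; first by right.
  by case: (l_min y (conj Ly (conj prev_y (elimN eqP y_neq))) (elimN eqP y_neq')).
by move=> /(IH l pre branch); rewrite big_cons mulnA prev_lE.
Qed.

Section Branch.
Variables (A : bmat) (n : nat).

Lemma Lset_gt1 l : Lset A n l -> 1 < l.
Proof. by case=> m [[l_gt0 _ _ _ [l_neq1 _ _ _ _]] _]; rewrite ltn_neqAle eq_sym l_neq1. Qed.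

Lemma Lset_factor l : Lset A n l ->
  [/\ 0 < n, l %| n & exists B C, smeq (n, A) (kron (l, B) (n %/ l, C))].
Proof.
case=> m [[l_gt0 m_gt0 l_n _ [_ _ _ _ lmE]] /admits2P].
have -> : m = n %/ l by rewrite -lmE mulKn.
by split=> //; rewrite -lmE muln_gt0 l_gt0.
Qed.

Lemma branch_from_factorization prev s F R :
  branch_from (Lset A n) prev s -> smeq (n, A) (kron (prev, F) (n %/ prev, R)) ->
  exists gs, map fst gs = step_sizes n prev s /\
             smeq (n, A) (kron (prev, F) (kronl gs)).
Proof.
elim: s prev F R => [|l s IH] prev F R.
  move=> _ HA; exists [:: (n %/ prev, R)]; split=> //.
  exact: smeq_trans HA (smeq_kron (smeq_refl _) (smeq_sym (kronm1 _))).
move=> [[[Ll [prev_l _]] _] branch] HA.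
have [_ l_n [B [C HB]]] := Lset_factor Ll.
set d := l %/ prev.
have lE : l = prev * d by rewrite mulnC divnK.
have prev_gt0 : 0 < prev by apply: dvdn_gt0 prev_l; apply: ltnW; apply: Lset_gt1.
have nE : n %/ prev = d * (n %/ l).
  by rewrite -{1}(divnK l_n) {2}lE mulnCA mulKn // mulnC.
rewrite nE in HA; rewrite {1}lE in HB.
have [Y HY] := kron_refine HA HB.
set FY := kron (prev, F) (d, Y).
have FYE : smeq (l, FY.2) FY by split.
have HFY : smeq (n, A) (kron (l, FY.2) (n %/ l, C)).
  exact: smeq_trans HY (smeq_sym (smeq_trans (smeq_kron FYE (smeq_refl _)) (kron_assoc _ _ _))).
have [gs [sizes Hgs]] := IH l FY.2 C branch HFY.
exists ((d, Y) :: gs); split; first by rewrite /= sizes.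
exact: smeq_trans Hgs (smeq_trans (smeq_kron FYE (smeq_refl _)) (kron_assoc _ _ _)).
Qed.

Lemma factor_prime_of_gap pre f post :
  0 < n -> smeq (n, A) (kronl (pre ++ f :: post)) ->
  divisibility_gap (Lset A n) (kronl pre).1 ((kronl pre).1 * f.1) ->
  prime_mat f.1 f.2.
Proof.
case: f => m X /= n_gt0 HA + [[|g [|h gs]] [//= _ [gt1 /factorizationP [_ Hf]]]].
have g_gt1 : 1 < g.1 by apply: gt1; left.
have h_gt1 : 1 < h.1 by apply: gt1; right; left.
have /admits_cat : smeq (n, A) (kronl (rcons pre g ++ (h :: gs) ++ post)).
  by rewrite cat_rcons; exact: smeq_trans HA (kronl_refine pre post Hf).
rewrite -cats1 (kronl_cat pre _).1 /= (kronl_cat gs post).1 /= muln1.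
have nE : n = (kronl pre).1 * (m * (kronl post).1).
  by rewrite [LHS]HA.1 (kronl_cat pre _).1.
have mE : m = g.1 * (h.1 * (kronl gs).1) := Hf.1.
move: (kronl pre).1 (kronl post).1 (kronl gs).1 nE mE => P Q r nE mE.
have : 0 < P * (g.1 * (h.1 * r) * Q) by rewrite -mE -nE.
rewrite !muln_gt0 => /and3P[P_gt0 /and3P[_ _ r_gt0] Q_gt0] adm gap.
have [] := gap (P * g.1).
- exists (h.1 * (r * Q)); split; last exact: adm.
  have -> : n = P * g.1 * (h.1 * (r * Q)) by rewrite nE mE !mulnA.
  by apply: compatible_mul; nia.
- exact: dvdn_mulr.
- by rewrite mE mulnA dvdn_mulr.
- by rewrite -{2}[P]muln1 => /eqP; rewrite eqn_pmul2l // gtn_eqF.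
- rewrite mE => /eqP; rewrite eqn_pmul2l // -{1}[g.1]muln1 eqn_pmul2l ?(ltnW g_gt1) //.
  by rewrite eq_sym muln_eq1 gtn_eqF.
Qed.

End Branch.

Theorem corollary3 (n : nat) (A : bmat) (s : seq nat) :
  is_branch (Lset A n) s ->
  admits A n (branch_sizes n s) /\
  (forall fs, factorization A n (branch_sizes n s) fs ->
     forall f, List.In f fs -> prime_mat f.1 f.2).
Proof.
case: s => [|l s] //; rewrite branch_sizesE => branch.
have [[Ll _] _] := branch.
have [n_gt0 _ _] := Lset_factor Ll.
have {}branch := branch_from_one (@Lset_gt1 A n) branch.
split.
  have [|gs [sizes HA]] := branch_from_factorization (F := mat1.2) (R := A) branch.
    by rewrite divn1; exact/smeq_sym/kron1m.
  by exists gs; apply/factorizationP; split; last exact: smeq_trans HA (kron1m _).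
move=> fs /factorizationP [sizes HA] f f_in.
have [pre [post fsE]] := List.in_split f fs f_in.
rewrite {}fsE map_cat in sizes HA; apply: factor_prime_of_gap n_gt0 HA _.
by have := branch_from_gap branch (esym sizes); rewrite mul1n kronl_size.
Qed.
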